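(* Let $V$ be a finite vocabulary. Each word $x\in V$ has a synonym set $S_x\subseteq V$ with $x\in S_x$, the synonym relation being symmetric, and a nonempty perturbation set $P_x\subseteq V$. Fix integers $L\ge1$, $0\le R\le L$, a finite label set $\mathcal{Y}$ with $|\mathcal{Y}|\ge2$, and a classifier $f:V^L\to\mathcal{Y}$. For $X=x_1,\ldots,x_L\in V^L$ let $S_X=\{X'\in V^L: \sum_i\mathbb{I}\{x'_i\ne x_i\}\le R,\ x'_i\in S_{x_i}\ \forall i\}$, let $\Pi_X(Z)=\prod_{i=1}^L\mathbb{I}\{z_i\in P_{x_i}\}/|P_{x_i}|$, let $g^{\mathrm{RS}}(X,c)=\mathbb{P}_{Z\sim\Pi_X}(f(Z)=c)$, and let $f^{\mathrm{RS}}(X)=\arg\max_{c\in\mathcal{Y}}g^{\mathrm{RS}}(X,c)$. Assume $|P_x|=|P_{x'}|$ for every word $x$ and every $x'\in S_x$. Let $q_x=\min_{x'\in S_x}|P_x\cap P_{x'}|/|P_x|$, and for a sentence $X$ order its positions $i_1,\ldots,i_L$ so that $q_{x_{i_1}}\le\cdots\le q_{x_{i_L}}$ and put $q_X=1-\prod_{j=1}^R q_{x_{i_j}}$. For a sentence $X$ and a label $y\in\mathcal{Y}$ define $y_B=\arg\max_{c\in\mathcal{Y},c\ne y}g^{\mathrm{RS}}(X,c)$. If $$\Delta_X:=g^{\mathrm{RS}}(X,y)-g^{\mathrm{RS}}(X,y_B)-2q_X>0,$$ then $f^{\mathrm{RS}}(X')=f^{\mathrm{RS}}(X)=y$ for every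 $X'\in S_X$ (i.e. $y$ is the unique maximizer of $c\mapsto g^{\mathrm{RS}}(X',c)$ for every $X'\in S_X$).
   Context: $f^{\mathrm{RS}}$ is the randomized-smoothing classifier built from the base classifier $f$ by uniformly random word substitutions from the perturbation sets. *)

From mathcomp Require Import all_boot all_order all_algebra.
Set Implicit Arguments. Unset Strict Implicit. Unset Printing Implicit Defensive.
Import Order.TTheory GRing.Theory Num.Theory.
Local Open Scope ring_scope.

Section RS.
Variables (K : realFieldType) (V Y : finType) (L R : nat).
Variables (S P : V -> {set V}) (f : {ffun 'I_L -> V} -> Y).

Definition inSX (X X' : {ffun 'I_L -> V}) : bool :=
  ((\sum_(i < L) (X' i != X i)) <= R)%N && [forall i, X' i \in S (X i)].

Definition PiX (X Z : {ffun 'I_L -> V}) : K :=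
  \prod_(i < L) ((Z i \in P (X i))%:R / #|P (X i)|%:R).

Definition gRS (X : {ffun 'I_L -> V}) (c : Y) : K :=
  \sum_(Z : {ffun 'I_L -> V} | f Z == c) PiX X Z.

(* q_x = min_{x' in S_x} |P_x cap P_x'| / |P_x|  (all ratios are <= 1,
   and x \in S_x, so the neutral element 1 does not change the minimum) *)
Definition qword (x : V) : K :=
  \big[Num.min/1]_(x' in S x) (#|P x :&: P x'|%:R / #|P x|%:R).

Definition qsent (X : {ffun 'I_L -> V}) : K :=
  let qs := sort (fun a b : K => a <= b) [seq qword (X i) | i <- enum 'I_L] in
  1 - \prod_(j < R) nth 1 qs j.

(* g^RS(X, y_B) = max_{c != y} g^RS(X, c)  (g >= 0 and such c exist) *)
Definition gRS_runnerup (X : {ffun 'I_L -> V}) (y : Y) : K :=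
  \big[Num.max/0]_(c | c != y) gRS X c.

End RS.

(* For X' in S_X, both Pi_X and Pi_X' dominate the sub-probability
   m(Z) = prod_i 1{z_i in P_{x_i} ∩ P_{x'_i}} / |P_{x_i}|  (using |P_{x_i}| = |P_{x'_i}|).
   Its mass prod_i |P_{x_i} ∩ P_{x'_i}| / |P_{x_i}| is at least the product of
   q_{x_i} over the at most R changed positions, hence at least the product of
   the R smallest q's, which is 1 - q_X.  So Pi_X and Pi_X' give every event
   probabilities within q_X of each other, and a margin larger than 2 q_X
   between y and every other label survives the move from X to X'. *)
From mathcomp Require Import all_boot all_order all_algebra.
From mathcomp Require Import lra.
Set Implicit Arguments. Unset Strict Implicit. Unset Printing Implicit Defensive.
Import Order.TTheory GRing.Theory Num.Theory.
Local Open Scope ring_scope.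

Section UnitIntervalProducts.
Variable K : realFieldType.

Lemma prod_unit_interval (s : seq K) :
  {in s, forall x, 0 <= x <= 1} -> 0 <= \prod_(x <- s) x <= 1.
Proof.
move=> s01; rewrite big_seq; apply/andP; split.
  by apply: prodr_ge0 => x /s01/andP[].
by apply: prodr_ile1 => x /s01.
Qed.

Lemma prod_take_sorted_le (t u w : seq K) (k : nat) :
  sorted <=%R t -> {in t, forall x, 0 <= x <= 1} ->
  perm_eq t (u ++ w) -> (size u <= k)%N ->
  \prod_(x <- take k t) x <= \prod_(x <- u) x.
Proof.
elim: t k u w => [|a t IH] k u w sorted_t t01 tuw uk.
  by case: u tuw {uk} => [|? ?] /perm_size //; rewrite !big_nil.
have sorted_t' := path_sorted sorted_t.
have t01' : {in t, forall x, 0 <= x <= 1} by move=> x xt; apply: t01; rewrite inE xt orbT.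
have /andP[a0 a1] := t01 a (mem_head a t).
case: k uk => [|k] uk.
  by move: uk; rewrite leqn0 size_eq0 => /eqP->; rewrite take0 !big_nil.
rewrite /= big_cons.
(* [a] is the smallest entry: either it occurs in [u] and cancels, or it is
   at most the head [b] of [u], which then takes its place in [t]. *)
have [au|au] := boolP (a \in u).
  rewrite (perm_big _ (perm_to_rem au)) big_cons; apply: (ler_wpM2l a0).
  apply: (IH k (rem a u) w sorted_t' t01'); last by rewrite size_rem //; case: (size u) uk.
  rewrite -(perm_cons a); apply: perm_trans tuw _.
  by rewrite -cat_cons perm_cat2r perm_to_rem.
case: u tuw uk au => [|b u] tuw uk au.
  have take01 : {in take k t, forall x, 0 <= x <= 1} by move=> x /mem_take/t01'.
  have /andP[take0 take1] := prod_unit_interval take01.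
  by rewrite big_nil mulr_ile1.
have aw : a \in w.
  by move: (perm_mem tuw a); rewrite mem_head mem_cat (negbTE au) /= => <-.
have ba : b != a by apply: contraNneq au => ->; exact: mem_head.
have bt : b \in t.
  by move: (perm_mem tuw b); rewrite mem_cat mem_head inE (negbTE ba) /= => ->.
have ab : a <= b by move/allP: (order_path_min le_trans sorted_t); apply.
have t_perm : perm_eq t (u ++ b :: rem a w).
  rewrite -(perm_cons a); apply: perm_trans tuw _.
  apply/permP => p; rewrite /= !count_cat /= (permP (perm_to_rem aw)) /=.
  by rewrite !(addnCA (count p u)) addnCA.
have u01 : {in u, forall x, 0 <= x <= 1}.
  by move=> x xu; apply: t01; rewrite (perm_mem tuw) mem_cat inE xu orbT.
have /andP[u0 _] := prod_unit_interval u01.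
rewrite big_cons; apply: le_trans (ler_wpM2l a0 (IH k u _ sorted_t' t01' t_perm uk)) _.
exact: ler_wpM2r.
Qed.

Lemma prod_sort_le (s u w : seq K) (k : nat) :
  {in s, forall x, 0 <= x <= 1} -> perm_eq s (u ++ w) ->
  (size u <= k <= size s)%N ->
  \prod_(j < k) nth 1 (sort <=%R s) j <= \prod_(x <- u) x.
Proof.
move=> s01 suw /andP[uk ks].
have -> : \prod_(j < k) nth 1 (sort <=%R s) j = \prod_(x <- take k (sort <=%R s)) x.
  rewrite (big_nth 1) size_takel ?size_sort // big_mkord.
  by apply: eq_bigr => j _; rewrite nth_take.
apply: (prod_take_sorted_le (w := w)) uk; first exact: (sort_sorted le_total).
  by move=> x; rewrite mem_sort; apply: s01.
by rewrite perm_sort.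
Qed.

End UnitIntervalProducts.

Lemma sum_sub_le_of_common_minorant (K : realFieldType) (I : finType)
    (p1 p2 m : I -> K) (q : K) (A : pred I) :
  \sum_i p1 i = 1 -> (forall i, m i <= p1 i) -> (forall i, m i <= p2 i) ->
  1 - q <= \sum_i m i ->
  \sum_(i | A i) p1 i - q <= \sum_(i | A i) p2 i.
Proof.
move=> p1_sum1 m_le_p1 m_le_p2 m_mass.
have mA : \sum_(i | A i) m i <= \sum_(i | A i) p2 i by apply: ler_sum => i _.
have mAC : \sum_(i | ~~ A i) m i <= \sum_(i | ~~ A i) p1 i by apply: ler_sum => i _.
move: p1_sum1 m_mass; rewrite [\sum_i p1 i](bigID A) [\sum_i m i](bigID A) /=.
lra.
Qed.

Section Smoothing.
Variables (K : realFieldType) (V : finType) (L R : nat).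
Variables (S P : V -> {set V}).
Hypothesis P_neq0 : forall x, P x != set0.
Hypothesis P_card_syn : forall x x', x' \in S x -> #|P x| = #|P x'|.

Local Notation sentence := {ffun 'I_L -> V}.

Lemma sum_indicator_div (A : {set V}) (n : K) :
  \sum_v (v \in A)%:R / n = #|A|%:R / n.
Proof.
rewrite -mulr_suml (eq_bigr (fun v => if v \in A then 1 else 0)).
  by rewrite -big_mkcond sumr_const.
by move=> v _; case: (v \in A).
Qed.

Lemma card_P_neq0 (x : V) : #|P x|%:R != 0 :> K.
Proof. by rewrite pnatr_eq0 -lt0n card_gt0. Qed.

Lemma sum_PiX (X : sentence) : \sum_Z PiX K P X Z = 1.
Proof.
rewrite /PiX -(bigA_distr_bigA (fun i v => (v \in P (X i))%:R / #|P (X i)|%:R : K)).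
apply: big1 => i _.
by rewrite sum_indicator_div divff ?card_P_neq0.
Qed.

Definition overlap_frac (x x' : V) : K := #|P x :&: P x'|%:R / #|P x|%:R.

Definition PiX_common (X X' Z : sentence) : K :=
  \prod_(i < L) ((Z i \in P (X i) :&: P (X' i))%:R / #|P (X i)|%:R).

Lemma sum_PiX_common (X X' : sentence) :
  \sum_Z PiX_common X X' Z = \prod_i overlap_frac (X i) (X' i).
Proof.
rewrite /PiX_common.
rewrite -(bigA_distr_bigA (fun i v => (v \in P (X i) :&: P (X' i))%:R / #|P (X i)|%:R : K)).
apply: eq_bigr => i _.
exact: sum_indicator_div.
Qed.

Lemma PiX_common_le_l (X X' Z : sentence) : PiX_common X X' Z <= PiX K P X Z.
Proof.
apply: ler_prod => i _; rewrite divr_ge0 ?ler0n //= ler_wpM2r ?invr_ge0 ?ler0n //.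
by rewrite ler_nat in_setI; case: (_ \in _); case: (_ \in _).
Qed.

Lemma PiX_common_le_r (X X' Z : sentence) :
  (forall i, X' i \in S (X i)) -> PiX_common X X' Z <= PiX K P X' Z.
Proof.
move=> XS; apply: ler_prod => i _.
rewrite divr_ge0 ?ler0n //= (P_card_syn (XS i)) ler_wpM2r ?invr_ge0 ?ler0n //.
by rewrite ler_nat in_setI; case: (_ \in _); case: (_ \in _).
Qed.

Lemma qword_ge0 (x : V) : 0 <= qword K S P x.
Proof. by apply/bigmin_geP; split=> [|x' _]; rewrite ?ler01 ?divr_ge0 ?ler0n. Qed.

Lemma qword_le1 (x : V) : qword K S P x <= 1.
Proof. exact: bigmin_le_id. Qed.

Lemma qword_le_overlap_frac (x x' : V) : x' \in S x -> qword K S P x <= overlap_frac x x'.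
Proof. exact: bigmin_le_cond. Qed.

Lemma prod_qword_changed_le (X X' : sentence) : (forall i, X' i \in S (X i)) ->
  \prod_(i | X' i != X i) qword K S P (X i) <= \prod_i overlap_frac (X i) (X' i).
Proof.
move=> XS; rewrite big_mkcond; apply: ler_prod => i _.
case: ifP => [_|/negbFE/eqP->]; first by rewrite qword_ge0 qword_le_overlap_frac.
by rewrite /overlap_frac setIid divff ?card_P_neq0 // lexx ler01.
Qed.

Lemma one_sub_qsent_le (X X' : sentence) : (R <= L)%N -> inSX R S X X' ->
  1 - qsent K R S P X <= \prod_(i | X' i != X i) qword K S P (X i).
Proof.
move=> RL /andP[changed_le _].
pose changed := [seq i <- enum 'I_L | X' i != X i].
have size_changed : (size changed <= R)%N.
  rewrite size_filter -sum1_count big_enum_cond; apply: leq_trans changed_le.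
  by rewrite big_mkcond /=; apply: leq_sum => i _; case: (X' i != X i).
pose q i := qword K S P (X i).
have -> : \prod_(i | X' i != X i) q i = \prod_(x <- map q changed) x.
  by rewrite big_map big_filter big_enum_cond.
rewrite /qsent opprB addrC subrK.
apply: (prod_sort_le (w := map q [seq i <- enum 'I_L | ~~ (X' i != X i)])).
- by move=> _ /mapP[i _ ->]; rewrite qword_ge0 qword_le1.
- by rewrite -map_cat perm_map // perm_sym perm_filterC.
by rewrite size_map size_changed size_map size_enum_ord.
Qed.

Lemma PiX_event_close (X X' : sentence) (A : pred sentence) :
  (R <= L)%N -> inSX R S X X' ->
  `|\sum_(Z | A Z) PiX K P X Z - \sum_(Z | A Z) PiX K P X' Z| <= qsent K R S P X.
Proof.
move=> RL XX'; have /andP[_ /forallP XS] := XX'.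
have common_mass : 1 - qsent K R S P X <= \sum_Z PiX_common X X' Z.
  rewrite sum_PiX_common; apply: le_trans (one_sub_qsent_le RL XX') _.
  exact: prod_qword_changed_le.
have := sum_sub_le_of_common_minorant A (sum_PiX X) (PiX_common_le_l X X')
  (fun Z => PiX_common_le_r Z XS) common_mass.
have := sum_sub_le_of_common_minorant A (sum_PiX X') (fun Z => PiX_common_le_r Z XS)
  (PiX_common_le_l X X') common_mass.
rewrite ler_norml; lra.
Qed.

End Smoothing.

Theorem proposition1 (K : realFieldType) (V Y : finType) (L R : nat)
  (S P : V -> {set V}) (f : {ffun 'I_L -> V} -> Y)
  (hL : (1 <= L)%N) (hR : (R <= L)%N) (hY : (2 <= #|Y|)%N)
  (hSrefl : forall x, x \in S x)
  (hSsym : forall x x', x' \in S x -> x \in S x')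
  (hP : forall x, P x != set0)
  (hPcard : forall x x', x' \in S x -> #|P x| = #|P x'|)
  (X : {ffun 'I_L -> V}) (y : Y) :
  gRS K P f X y - gRS_runnerup K P f X y - 2 * qsent K R S P X > 0 ->
  forall X', inSX R S X X' ->
    forall c, c != y -> gRS K P f X' c < gRS K P f X' y.
Proof.
move=> margin X' XX' c cy.
have gRS_close c' : `|gRS K P f X c' - gRS K P f X' c'| <= qsent K R S P X.
  exact: (PiX_event_close K hP hPcard (fun Z => f Z == c') hR XX').
have runnerup_ge : gRS K P f X c <= gRS_runnerup K P f X y.
  exact: le_bigmax_cond.
move: (gRS_close y) (gRS_close c); rewrite !ler_norml => /andP[? ?] /andP[? ?].
lra.
Qed.
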